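(* Suppose $\mathcal{B}^\#$ is a computable Banach space presentation and $P\subseteq\mathbb{N}^\mathbb{N}$ is $\Pi^0_2$. Then there is a computable operator $F:\mathbb{N}^\mathbb{N}\to\mathbb{N}^\mathbb{N}$ such that for every $f\in\mathbb{N}^\mathbb{N}$, $F(f)$ names $\mathcal{B}^\#$ if $P(f)$ holds, and otherwise $F(f)$ names no Banach space presentation.
   Context: A presentation $\mathcal{B}^\#=(\mathcal{B},R)$ of a Banach space $\mathcal{B}$ has $R:\mathbb{N}\to\mathcal{B}$ with linearly dense range; its rational vectors are finite rational-scalar ($\mathbb{F}\cap\mathbb{Q}(i)$) combinations of the $R(n)$, coded by numbers via a fixed Gödel numbering of formal expressions. With $I_n$ the $n$-th rational open interval in a fixed effective enumeration, the diagram of $\mathcal{B}^\#$ is the set of codes of pairs $(m,n)$ such that the norm of the $m$-th rational vector lies in $I_n$. $\mathcal{B}^\#$ is computable if its diagram is computably enumerable (equivalently, the norm is uniformly computable on rational vectors). A name of $\mathcal{B}^\#$ is any $f\in\mathbb{N}^\mathbb{N}$ whose range is its diagram; $f$ names a Banach space presentation if it names some presentation of some Banach space. $\Pi^0_2$ is in the lightface arithmetical hierarchy on $\mathbb{N}^\mathbb{N}$. *)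

From HB Require Import structures.
From mathcomp Require Import all_boot all_order all_algebra.
From mathcomp Require Import all_classical all_reals all_analysis.
From mathcomp Require Import complex.
Set Implicit Arguments. Unset Strict Implicit. Unset Printing Implicit Defensive.
Import Order.TTheory GRing.Theory Num.Theory.
Import numFieldNormedType.Exports.
Local Open Scope ring_scope.

Definition Scal (R : realType) (c : bool) : numFieldType :=
  if c then Num.NumField.clone R[i] _ else Num.NumField.clone R _.

Definition qscal (R : realType) (c : bool) : rat * rat -> Scal R c :=
  match c return rat * rat -> Scal R c with
  | true => fun q => (ratr q.1 +i* ratr q.2)%C
  | false => fun q => ratr q.1
  end.

Inductive prf : Type :=
| PZero : prf
| PSucc : prf
| PProj : nat -> prf
| PComp : prf -> seq prf -> prf
| PRec  : prf -> prf -> prf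
| PMin  : prf -> prf.

Inductive eval : prf -> seq nat -> nat -> Prop :=
| eval_zero xs : eval PZero xs 0
| eval_succ x xs : eval PSucc (x :: xs) x.+1
| eval_proj i xs : (i < size xs)%N -> eval (PProj i) xs (nth 0%N xs i)
| eval_comp f gs xs ys y :
    evals gs xs ys -> eval f ys y -> eval (PComp f gs) xs y
| eval_rec0 b s xs y : eval b xs y -> eval (PRec b s) (0%N :: xs) y
| eval_recS b s n xs z y :
    eval (PRec b s) (n :: xs) z -> eval s (n :: z :: xs) y ->
    eval (PRec b s) (n.+1 :: xs) y
| eval_min f xs y :
    eval f (y :: xs) 0 ->
    (forall z, (z < y)%N -> exists w, eval f (z :: xs) w.+1) ->
    eval (PMin f) xs y
with evals : seq prf -> seq nat -> seq nat -> Prop :=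
| evals_nil xs : evals [::] xs [::]
| evals_cons g gs xs y ys :
    eval g xs y -> evals gs xs ys -> evals (g :: gs) xs (y :: ys).

Definition computable1 (h : nat -> nat) : Prop :=
  exists p, forall x, eval p [:: x] (h x).
Definition computable2 (h : nat -> nat -> nat) : Prop :=
  exists p, forall x y, eval p [:: x; y] (h x y).

Definition ce (A : nat -> Prop) : Prop :=
  exists p, forall x, A x <-> exists y, eval p [:: x] y.

Definition init (f : nat -> nat) (m : nat) : nat := pickle (mkseq f m).

Definition Pi02 (P : (nat -> nat) -> Prop) : Prop :=
  exists r : nat -> nat -> nat, computable2 r /\
    forall f, P f <-> forall n, exists m, r n (init f m) <> 0%N.

(* computable (total) operators N^N -> N^N (type-2 computability):
   there is a computable g such that g(f|m, n) is either 0 ("no answer yet")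
   or (F f n).+1, and some finite initial segment of f yields the answer. *)
Definition computable_operator (F : (nat -> nat) -> (nat -> nat)) : Prop :=
  exists g : nat -> nat -> nat, computable2 g /\
    forall f n,
      (forall m, g (init f m) n = 0%N \/ g (init f m) n = (F f n).+1) /\
      (exists m, g (init f m) n = (F f n).+1).

Section Presentations.
Variables (R : realType) (c : bool).
Local Notation K := (Scal R c).

Definition lin_dense (B : completeNormedModType K) (e : nat -> B) : Prop :=
  forall (x : B) (eps : K), 0 < eps ->
    exists s : seq (K * nat), `|x - \sum_(p <- s) p.1 *: e p.2| < eps.

(* fixed Goedel numbering of formal rational linear combinations:
   a formal expression is a finite list of (rational scalar, index) pairs;
   a rational scalar (a, b) denotes a + b i in the complex case and a in
   the real case (so the scalars range over F ∩ Q(i)). *)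
Definition formal_expr (m : nat) : seq ((rat * rat) * nat) :=
  odflt [::] (unpickle m).

Definition rat_vector (B : completeNormedModType K) (e : nat -> B) (m : nat) : B :=
  \sum_(p <- formal_expr m) @qscal R c p.1 *: e p.2.

Definition rat_interval (n : nat) : rat * rat := odflt (0, 0) (unpickle n).

Definition in_rat_interval (x : K) (n : nat) : bool :=
  (ratr (rat_interval n).1 < x) && (x < ratr (rat_interval n).2).

Definition diagram (B : completeNormedModType K) (e : nat -> B) (k : nat) : Prop :=
  exists m n, k = pickle (m, n) /\ in_rat_interval `|rat_vector e m| n.

Definition computable_presentation (B : completeNormedModType K) (e : nat -> B) : Prop :=
  ce (diagram e).

Definition names (B : completeNormedModType K) (e : nat -> B) (f : nat -> nat) : Prop :=
  forall k, (exists i, f i = k) <-> diagram e k.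

Definition names_some_presentation (f : nat -> nat) : Prop :=
  exists (B : completeNormedModType K) (e : nat -> B), lin_dense e /\ names e f.

End Presentations.

From HB Require Import structures.
From mathcomp Require Import all_boot all_order all_algebra.
From mathcomp Require Import all_classical all_reals all_analysis.
From mathcomp Require Import complex.
Set Implicit Arguments. Unset Strict Implicit. Unset Printing Implicit Defensive.
Import Order.TTheory GRing.Theory Num.Theory.

(* A c.e. set [A] with an element [x0] is the range of a total computable
   function [ce_enum].  Write [P f] as [forall n, exists m, r n (f|m) <> 0].
   While reading [f], the operator keeps a counter [c], which moves on to
   [c.+1] as soon as one of the prefixes read so far witnesses [r c _ <> 0],
   and at stage [n] it outputs [ce_enum c].  If [P f] holds, the counter takes
   every value and the output ranges over all of [A]; otherwise the counter
   gets stuck and the output has finite range.  For [A] the diagram of the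
   given presentation, finite range rules out naming any presentation: the
   zero vector has its norm in every interval (-1, i+1), so every diagram is
   infinite.  Computability is checked against the mu-recursive functions:
   for each program [p], running [p] with a step budget [s] is a total
   recursive function of [s] and the input. *)

(** * Recursive functions *)

Definition recursive (k : nat) (F : seq nat -> nat) : Prop :=
  exists p, forall xs, size xs = k -> eval p xs (F xs).

Fixpoint all_recursive (k : nat) (Fs : seq (seq nat -> nat)) : Prop :=
  if Fs is F :: Fs' then recursive k F /\ all_recursive k Fs' else True.

Lemma recursive_ext k F G :
  (forall xs, size xs = k -> F xs = G xs) -> recursive k F -> recursive k G.
Proof. by move=> eFG [p hp]; exists p => xs hxs; rewrite -eFG //; apply: hp. Qed.

Lemma recursive0 k : recursive k (fun _ => 0).
Proof. by exists PZero => xs _; constructor. Qed.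

Lemma recursive_proj k i : i < k -> recursive k (fun xs => nth 0 xs i).
Proof. by move=> ik; exists (PProj i) => xs hxs; constructor; rewrite hxs. Qed.

Lemma recursive_succ : recursive 1 (fun xs => (nth 0 xs 0).+1).
Proof. by exists PSucc => -[|x [|]] //= _; constructor. Qed.

Lemma all_recursive_evals k Fs : all_recursive k Fs ->
  exists gs, forall xs, size xs = k -> evals gs xs [seq F xs | F <- Fs].
Proof.
elim: Fs => [|F Fs IH] /=; first by exists [::] => xs _; constructor.
case=> -[g hg] /IH[gs hgs]; exists (g :: gs) => xs hxs; constructor; auto.
Qed.

Lemma recursive_comp k F Fs : recursive (size Fs) F -> all_recursive k Fs ->
  recursive k (fun xs => F [seq G xs | G <- Fs]).
Proof.
move=> [f hf] /all_recursive_evals[gs hgs]; exists (PComp f gs) => xs hxs.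
by apply: eval_comp (hgs _ hxs) _; apply: hf; rewrite size_map.
Qed.

Fixpoint natrec (B S : seq nat -> nat) (n : nat) (xs : seq nat) : nat :=
  if n is n'.+1 then S (n' :: natrec B S n' xs :: xs) else B xs.

Lemma recursive_rec k B S : recursive k B -> recursive k.+2 S ->
  recursive k.+1 (fun xs => natrec B S (nth 0 xs 0) (behead xs)).
Proof.
move=> [b hb] [s hs]; exists (PRec b s) => -[|n xs] //= [hxs].
elim: n => [|n IH] /=; first exact/eval_rec0/hb.
by apply: eval_recS IH _; apply: hs; rewrite /= hxs.
Qed.

Lemma computable2_recursive (g : nat -> nat -> nat) :
  computable2 g <-> recursive 2 (fun xs => g (nth 0 xs 0) (nth 0 xs 1)).
Proof.
split=> -[p hp]; exists p; first by move=> -[|x [|y [|]]] //= _; apply: hp.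
by move=> x y; apply: (hp [:: x; y]).
Qed.

Lemma recursive_comp1 k (op : nat -> nat) A :
  recursive 1 (fun xs => op (nth 0 xs 0)) -> recursive k A ->
  recursive k (fun xs => op (A xs)).
Proof. by move=> hop hA; apply: (recursive_comp (Fs := [:: A]) hop). Qed.

Lemma recursive_comp2 k (op : nat -> nat -> nat) A B :
  recursive 2 (fun xs => op (nth 0 xs 0) (nth 0 xs 1)) ->
  recursive k A -> recursive k B -> recursive k (fun xs => op (A xs) (B xs)).
Proof. by move=> hop hA hB; apply: (recursive_comp (Fs := [:: A; B]) hop). Qed.

Lemma recursive_comp3 k (op : nat -> nat -> nat -> nat) A B C :
  recursive 3 (fun xs => op (nth 0 xs 0) (nth 0 xs 1) (nth 0 xs 2)) ->
  recursive k A -> recursive k B -> recursive k C ->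
  recursive k (fun xs => op (A xs) (B xs) (C xs)).
Proof. by move=> hop hA hB hC; apply: (recursive_comp (Fs := [:: A; B; C]) hop). Qed.

Lemma recursiveS k A : recursive k A -> recursive k (fun xs => (A xs).+1).
Proof. exact: (recursive_comp1 (op := succn) recursive_succ). Qed.

Lemma recursive_cst k n : recursive k (fun _ => n).
Proof. by elim: n => [|n]; [apply: recursive0 | apply: recursiveS]. Qed.

Lemma recursiveD k A B : recursive k A -> recursive k B ->
  recursive k (fun xs => A xs + B xs).
Proof.
apply: (recursive_comp2 (op := addn)).
have := recursive_rec (@recursive_proj 1 0 isT) (recursiveS (@recursive_proj 3 1 isT)).
apply: recursive_ext => -[|n [|m [|]]] //= _.
by elim: n => //= n ->.
Qed.

Lemma recursiveM k A B : recursive k A -> recursive k B ->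
  recursive k (fun xs => A xs * B xs).
Proof.
apply: (recursive_comp2 (op := muln)).
have := recursive_rec (recursive0 1)
  (recursiveD (@recursive_proj 3 1 isT) (@recursive_proj 3 2 isT)).
apply: recursive_ext => -[|n [|m [|]]] //= _.
by elim: n => //= n ->; rewrite mulSn addnC.
Qed.

Lemma recursiveP k A : recursive k A -> recursive k (fun xs => (A xs).-1).
Proof.
apply: (recursive_comp1 (op := predn)).
have := recursive_rec (recursive0 0) (@recursive_proj 2 0 isT).
by apply: recursive_ext => -[|[|n] [|]].
Qed.

Lemma recursive_if0 k C A B : recursive k C -> recursive k A -> recursive k B ->
  recursive k (fun xs => if C xs == 0 then A xs else B xs).
Proof.
apply: (recursive_comp3 (op := fun c a b => if c == 0 then a else b)).
have := recursive_rec (@recursive_proj 2 0 isT) (@recursive_proj 4 3 isT).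
by apply: recursive_ext => -[|[|n] [|a [|b [|]]]].
Qed.

Lemma recursive_iter k (op : nat -> nat) N U :
  recursive 1 (fun xs => op (nth 0 xs 0)) -> recursive k N -> recursive k U ->
  recursive k (fun xs => iter (N xs) op (U xs)).
Proof.
move=> hop; apply: (recursive_comp2 (op := fun n u => iter n op u)).
have := recursive_rec (@recursive_proj 1 0 isT)
  (recursive_comp1 hop (@recursive_proj 3 1 isT)).
apply: recursive_ext => -[|n [|u [|]]] //= _.
by elim: n => //= n ->.
Qed.

Lemma recursiveB k A B : recursive k A -> recursive k B ->
  recursive k (fun xs => A xs - B xs).
Proof.
move=> hA hB; have := recursive_iter (recursiveP (@recursive_proj 1 0 isT)) hB hA.
by apply: recursive_ext => xs _; elim: (B xs) => [|b IH] /=; rewrite ?subn0 ?IH ?subnS.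
Qed.

Lemma recursive_odd k A : recursive k A -> recursive k (fun xs => odd (A xs)).
Proof.
apply: (recursive_comp1 (op := fun n => nat_of_bool (odd n))).
have := recursive_rec (recursive_cst 0 0)
  (recursive_if0 (@recursive_proj 2 1 isT) (recursive_cst 2 1) (recursive0 2)).
apply: recursive_ext => -[|n [|]] //= _.
by elim: n => //= n ->; case: (odd n).
Qed.

Lemma recursive_half k A : recursive k A -> recursive k (fun xs => (A xs)./2).
Proof.
apply: (recursive_comp1 (op := half)).
have := recursive_rec (recursive_cst 0 0)
  (recursiveD (@recursive_proj 2 1 isT) (recursive_odd (@recursive_proj 2 0 isT))).
apply: recursive_ext => -[|n [|]] //= _.
by elim: n => //= n ->; rewrite uphalf_half addnC.
Qed.

Lemma recursive_exp2 k A : recursive k A -> recursive k (fun xs => 2 ^ A xs).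
Proof.
apply: (recursive_comp1 (op := expn 2)).
have := recursive_rec (recursive_cst 0 1)
  (recursiveD (@recursive_proj 2 1 isT) (@recursive_proj 2 1 isT)).
apply: recursive_ext => -[|n [|]] //= _.
by elim: n => //= n ->; rewrite expnS mul2n addnn.
Qed.

Lemma all_recursive_proj k a b : a + b <= k ->
  all_recursive k [seq (fun xs => nth 0 xs i) | i <- iota a b].
Proof.
elim: b a => [|b IH] a //= hab; split.
  by apply: recursive_proj; rewrite (leq_trans _ hab) // -addn1 leq_add2l.
by apply: IH; rewrite addSnnS.
Qed.

Lemma map_proj_iota (xs : seq nat) a b : size xs = a + b ->
  [seq F xs | F <- [seq (fun ys => nth 0 ys i) | i <- iota a b]] = drop a xs.
Proof.
move=> hxs; rewrite -map_comp /= map_nth_iota ?hxs ?addKn //.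
by rewrite take_oversize // size_drop hxs addKn.
Qed.

Lemma all_recursive_cat k Fs Gs :
  all_recursive k Fs -> all_recursive k Gs -> all_recursive k (Fs ++ Gs).
Proof. by elim: Fs => //= F Fs IH [hF hFs] hGs; split; [|apply: IH]. Qed.

Lemma all_recursive_map k (op : nat -> nat) Fs :
  (forall A, recursive k A -> recursive k (fun xs => op (A xs))) ->
  all_recursive k Fs -> all_recursive k [seq (fun xs => op (F xs)) | F <- Fs].
Proof. by move=> hop; elim: Fs => //= F Fs IH [/hop hF /IH]. Qed.

Lemma recursive_prod k Fs : all_recursive k Fs ->
  recursive k (fun xs => \prod_(F <- Fs) F xs).
Proof.
elim: Fs => [_|F Fs IH [hF /IH hFs]] /=.
  by apply: recursive_ext (recursive_cst k 1) => xs _; rewrite big_nil.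
by apply: recursive_ext (recursiveM hF hFs) => xs _; rewrite big_cons.
Qed.

Lemma recursive_reshape m j (Hs : seq (seq nat -> nat)) F :
  all_recursive (m + j) Hs -> recursive (size Hs + j) F ->
  recursive (m + j) (fun xs => F ([seq H xs | H <- Hs] ++ drop m xs)).
Proof.
move=> hHs hF; pose Fs := Hs ++ [seq (fun xs => nth 0 xs i) | i <- iota m j].
have hFs : all_recursive (m + j) Fs by apply: all_recursive_cat hHs (all_recursive_proj _).
have hF' : recursive (size Fs) F by rewrite size_cat size_map size_iota.
have := recursive_comp hF' hFs.
by apply: recursive_ext => xs hxs; rewrite map_cat map_proj_iota.
Qed.

Lemma recursive_skip1 k H : recursive k.+1 H ->
  recursive k.+2 (fun ys => H (nth 0 ys 0 :: drop 2 ys)).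
Proof.
move=> hH; apply: (@recursive_reshape 2 k [:: fun ys => nth 0 ys 0]) => //.
by split=> //; apply: recursive_proj.
Qed.

Lemma recursive_sum k H : recursive k.+1 H ->
  recursive k.+1 (fun xs => \sum_(i < nth 0 xs 0) H ((i : nat) :: behead xs)).
Proof.
move=> hH; have := recursive_rec (recursive0 k)
  (recursiveD (@recursive_proj k.+2 1 isT) (recursive_skip1 hH)).
apply: recursive_ext => -[|t xs] //= _.
by elim: t => [|t IH] /=; rewrite ?big_ord0 // big_ord_recr IH drop0.
Qed.

Lemma find_iota_step (a : pred nat) t :
  find a (iota 0 t.+1) = if find a (iota 0 t) < t then find a (iota 0 t)
                         else if a t then t else t.+1.
Proof.
rewrite -[in LHS]addn1 iotaD find_cat has_find !size_iota add0n /=.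
by case: ifP => //; case: (a t); rewrite ?addn0 ?addn1.
Qed.

Lemma find_iota_eq (a : pred nat) t y :
  y < t -> a y -> (forall i, i < y -> ~~ a i) -> find a (iota 0 t) = y.
Proof.
move=> yt ay below; rewrite -(subnKC yt) addSnnS iotaD find_cat size_iota.
have -> : has a (iota 0 y) = false by apply/hasPn => i; rewrite mem_iota => /below.
by rewrite /= ay addn0.
Qed.

Lemma recursive_find k H : recursive k.+1 H ->
  recursive k.+1 (fun xs => find (fun i => H (i :: behead xs) != 0) (iota 0 (nth 0 xs 0))).
Proof.
move=> hH; have hT := @recursive_proj k.+2 0 isT; have hF := @recursive_proj k.+2 1 isT.
have := recursive_rec (recursive0 k) (recursive_if0 (recursiveB hT hF)
  (recursive_if0 (recursive_skip1 hH) (recursiveS hT) hT) hF).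
apply: recursive_ext => -[|t xs] //= _.
elim: t => // t IH; rewrite find_iota_step -IH [LHS]/= drop0 subn_eq0 leqNgt.
by case: ltnP => //; case: eqP.
Qed.

(** * Running programs with a step budget *)

Fixpoint all_prf (Q : prf -> Prop) (gs : seq prf) : Prop :=
  if gs is g :: gs' then Q g /\ all_prf Q gs' else True.

Definition prf_nested_ind (Q : prf -> Prop) (Q0 : Q PZero) (QS : Q PSucc)
    (Qproj : forall i, Q (PProj i))
    (Qcomp : forall f gs, Q f -> all_prf Q gs -> Q (PComp f gs))
    (Qrec : forall b s, Q b -> Q s -> Q (PRec b s))
    (Qmin : forall f, Q f -> Q (PMin f)) : forall p, Q p :=
  fix F p := match p return Q p with
    | PZero => Q0
    | PSucc => QS
    | PProj i => Qproj i
    | PComp f gs => Qcomp f gs (F f)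
        ((fix G gs := match gs return all_prf Q gs with
          | [::] => I
          | g :: gs' => conj (F g) (G gs') end) gs)
    | PRec b s => Qrec b s (F b) (F s)
    | PMin f => Qmin f (F f)
    end.

(* [run p s xs] is [v.+1] if [p] outputs [v] on [xs] within budget [s], and [0]
   if it finds no result within that budget; [s] bounds the search of every
   minimisation.  Scanning these encoded values, [min_search] is in state [0]
   while they are all nonzero results, [1] once a value without result is met,
   and [y.+2] once the result [0] is found at [y]. *)
Fixpoint min_search (h : nat -> nat) (t : nat) : nat :=
  if t is t'.+1 then
    let m := min_search h t' in
    if m == 0 then (if h t' == 0 then 1 else if h t' == 1 then t'.+2 else 0)
    else m
  else 0.

Fixpoint rec_search (b : nat) (s : nat -> nat -> nat) (n : nat) : nat :=
  if n is n'.+1 then let z := rec_search b s n' in if z == 0 then 0 else s n' z.-1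
  else b.

Fixpoint run (p : prf) (s : nat) (xs : seq nat) {struct p} : nat :=
  match p with
  | PZero => 1
  | PSucc => if xs is x :: _ then x.+2 else 0
  | PProj i => if i < size xs then (nth 0 xs i).+1 else 0
  | PComp f gs => let vs := [seq run g s xs | g <- gs] in
      if all (fun v => v != 0) vs then run f s (map predn vs) else 0
  | PRec b st => if xs is n :: xs' then
      rec_search (run b s xs') (fun j z => run st s (j :: z :: xs')) n else 0
  | PMin f => (min_search (fun t => run f s (t :: xs)) s).-1
  end.

Lemma min_search_eq0 h t : min_search h t = 0 -> forall z, z < t -> 2 <= h z.
Proof.
elim: t => [|t IH] //=; case: eqP => [m0|m0 /m0] //.
case: eqP => // h0; case: eqP => // h1 _ z; rewrite ltnS leq_eqVlt.
case/orP => [/eqP->|]; last exact: IH.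
by case: (h t) h0 h1 => [|[|]].
Qed.

Lemma min_search_eqS h t y : min_search h t = y.+2 ->
  [/\ y < t, h y = 1 & forall z, z < y -> 2 <= h z].
Proof.
elim: t => [|t IH] //=; case: eqP => [m0|_ /IH[yt *]]; last by split=> //; apply: ltnW.
case: eqP => // h0; case: eqP => // h1 [<-]; split=> //.
exact: min_search_eq0.
Qed.

Lemma min_search_witness h t y : y < t -> h y = 1 -> (forall z, z < y -> 2 <= h z) ->
  min_search h t = y.+2.
Proof.
move=> yt hy hz; have m0 : forall t, t <= y -> min_search h t = 0.
  elim=> [|u IHu] //= uy; rewrite IHu ?(ltnW uy) //=.
  by have := hz u uy; case: (h u) => [|[|]].
elim: t yt => // t IH; rewrite ltnS leq_eqVlt => /orP[/eqP<-|yt] /=.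
  by rewrite m0 // hy.
by rewrite IH.
Qed.

Lemma run_sound p s xs v : run p s xs = v.+1 -> eval p xs v.
Proof.
elim/prf_nested_ind: p s xs v.
- by move=> s xs v [<-]; constructor.
- by move=> s [|x xs] v //= [<-]; constructor.
- by move=> i s xs v /=; case: ifP => // hi [<-]; constructor.
- move=> f gs IHf IHgs s xs v /=; case: ifP => // hgs hf.
  apply: (eval_comp (ys := [seq predn (run g s xs) | g <- gs])); last first.
    by apply: (IHf s); rewrite -map_comp in hf.
  elim: gs IHgs hgs {hf} => [|g gs IH] /=; first by constructor.
  case=> IHg IHgs /andP[]; case E: (run g s xs) => [|w] // _ hgs.
  by constructor; [apply: IHg E | apply: IH].
- move=> b st IHb IHs s [|n xs] v //=.
  elim: n v => [|n IH] v /=; first by move/IHb; constructor.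
  case E: (rec_search _ _ n) => [|z] //= /IHs.
  exact: eval_recS (IH _ E).
- move=> f IHf s xs v /=.
  case E: (min_search _ s) => [|[|y]] //= [<-].
  case: (min_search_eqS E) => _ /IHf h1 h2; constructor => // z /h2.
  by case F: (run f s (z :: xs)) => [|[|w]] // _; exists w; apply: IHf F.
Qed.

Lemma run_mono p s s' xs v : s <= s' -> run p s xs = v.+1 -> run p s' xs = v.+1.
Proof.
move=> ss'; elim/prf_nested_ind: p xs v => //.
- move=> f gs IHf IHgs xs v /=; case: ifP => // hgs hf.
  suff -> : [seq run g s' xs | g <- gs] = [seq run g s xs | g <- gs].
    by rewrite hgs; apply: IHf.
  elim: gs IHgs hgs {hf} => [|g gs IH] //= [IHg IHgs] /andP[].
  by case E: (run g s xs) => [|w] // _ hgs; rewrite IH // (IHg _ _ E).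
- move=> b st IHb IHs [|n xs] v //=.
  elim: n v => [|n IH] v /=; first exact: IHb.
  by case E: (rec_search _ _ n) => [|z] //= /IHs; rewrite (IH _ E).
- move=> f IHf xs v /=.
  case E: (min_search _ s) => [|[|y]] //= [<-].
  case: (min_search_eqS E) => yt /IHf h1 h2.
  rewrite (@min_search_witness _ s' y) ?(leq_trans yt ss') // => z /h2.
  by case F: (run f s (z :: xs)) => [|[|w]] // _; rewrite (IHf _ _ F).
Qed.

Lemma runs_mono gs s s' xs ys : s <= s' ->
  [seq run g s xs | g <- gs] = [seq y.+1 | y <- ys] ->
  [seq run g s' xs | g <- gs] = [seq y.+1 | y <- ys].
Proof.
move=> ss'; elim: gs ys => [|g gs IH] [|y ys] //= [hg hgs].
by rewrite (run_mono ss' hg) (IH _ hgs).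
Qed.

Lemma uniform_bound (Q : nat -> nat -> Prop) y :
  (forall z s s', s <= s' -> Q z s -> Q z s') ->
  (forall z, z < y -> exists s, Q z s) -> exists s, forall z, z < y -> Q z s.
Proof.
move=> Qmono; elim: y => [|y IH] hQ; first by exists 0.
have [z zy|s hs] := IH; first by apply/hQ/ltnW.
have [s' hs'] := hQ y (ltnSn y); exists (maxn s s') => z.
rewrite ltnS leq_eqVlt => /orP[/eqP->|zy]; first exact: Qmono (leq_maxr _ _) hs'.
exact: Qmono (leq_maxl _ _) (hs _ zy).
Qed.

Fixpoint run_complete p xs v (H : eval p xs v) {struct H} :
  exists s, run p s xs = v.+1
with runs_complete gs xs ys (H : evals gs xs ys) {struct H} :
  exists s, [seq run g s xs | g <- gs] = [seq y.+1 | y <- ys].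
Proof.
- case: H.
  + by exists 0.
  + by exists 0.
  + by move=> i xs' hi; exists 0; rewrite /= hi.
  + move=> f gs xs' ys y Hgs Hf.
    have [s1 h1] := runs_complete _ _ _ Hgs; have [s2 h2] := run_complete _ _ _ Hf.
    exists (maxn s1 s2) => /=; rewrite (runs_mono (leq_maxl s1 s2) h1).
    have -> : all (fun v => v != 0) [seq y.+1 | y <- ys] by elim: ys {Hgs Hf h1 h2}.
    by rewrite -map_comp map_id_in //; apply: run_mono (leq_maxr s1 s2) h2.
  + by move=> b st xs' y Hb; apply: run_complete Hb.
  + move=> b st n xs' z y Hn Hs.
    have [s1 h1] := run_complete _ _ _ Hn; have [s2 h2] := run_complete _ _ _ Hs.
    exists (maxn s1 s2) => /=.
    have := run_mono (leq_maxl s1 s2) h1 => /= ->.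
    exact: run_mono (leq_maxr s1 s2) h2.
  + move=> f xs' y Hy Hlt.
    have [s1 h1] := run_complete _ _ _ Hy.
    have [s2 hs2] : exists s, forall z, z < y -> exists w, run f s (z :: xs') = w.+2.
      apply: uniform_bound => [z s s' ss' [w hw]|z zy].
        by exists w; apply: run_mono ss' hw.
      case: (Hlt z zy) => w Hw; have [s hs] := run_complete _ _ _ Hw.
      by exists s, w.
    exists (maxn (maxn s1 s2) y.+1) => /=.
    rewrite (@min_search_witness _ _ y) ?leq_maxr //.
      by apply: run_mono h1; rewrite leq_max leq_maxl.
    move=> z /hs2[w hw]; rewrite (run_mono _ hw) //.
    by rewrite !leq_max leqnn orbT.
- case: H; first by exists 0.
  move=> g gs' xs' y ys' Hg Hgs.
  have [s1 h1] := run_complete _ _ _ Hg; have [s2 h2] := runs_complete _ _ _ Hgs.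
  exists (maxn s1 s2) => /=.
  by rewrite (run_mono (leq_maxl s1 s2) h1) (runs_mono (leq_maxr s1 s2) h2).
Qed.

Definition run_recursive (p : prf) : Prop :=
  forall k, recursive k.+1 (fun sx => run p (nth 0 sx 0) (behead sx)).

Lemma run_recursive_succ : run_recursive PSucc.
Proof.
case=> [|k]; first by apply: recursive_ext (recursive0 1) => -[|s [|]].
apply: recursive_ext (recursiveS (recursiveS (@recursive_proj k.+2 1 isT))).
by move=> -[|s [|x xs]].
Qed.

Lemma run_recursive_proj i : run_recursive (PProj i).
Proof.
move=> k; have [ik|ki] := ltnP i k.
  apply: recursive_ext (recursiveS (@recursive_proj k.+1 i.+1 ik)).
  by move=> -[|s xs] //= [->]; rewrite ik.
apply: recursive_ext (recursive0 _) => -[|s xs] //= [->].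
by rewrite ltnNge ki.
Qed.

Lemma run_recursive_comp f gs :
  run_recursive f -> all_prf run_recursive gs -> run_recursive (PComp f gs).
Proof.
move=> hf hgs k; pose Gs := [seq (fun sx => run g (nth 0 sx 0) (behead sx)) | g <- gs].
have hGs : all_recursive k.+1 Gs by rewrite {}/Gs; elim: gs hgs => //= g gs IH [hg /IH].
pose Fs := (fun sx => nth 0 sx 0) :: [seq (fun sx => (G sx).-1) | G <- Gs].
have hFs : all_recursive k.+1 Fs.
  by split; [apply: recursive_proj | apply: all_recursive_map hGs => A /recursiveP].
have hf' : recursive (size Fs) (fun sx => run f (nth 0 sx 0) (behead sx)).
  by rewrite /= !size_map; apply: hf.
(* All the calls return iff the product of their results is nonzero. *)
have := recursive_if0 (recursive_prod hGs) (recursive0 _) (recursive_comp hf' hFs).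
apply: recursive_ext => sx _ /=; rewrite big_map prod_nat_seq_eq0.
have -> : has (fun g => true && (run g (nth 0 sx 0) (behead sx) == 0)) gs =
    ~~ all (fun v => v != 0) [seq run g (nth 0 sx 0) (behead sx) | g <- gs].
  by rewrite all_map -has_predC; apply: eq_has => g; rewrite /= negbK.
by rewrite if_neg /Gs -!map_comp.
Qed.

Lemma run_recursive_rec b st :
  run_recursive b -> run_recursive st -> run_recursive (PRec b st).
Proof.
move=> hb hst [|k]; first by apply: recursive_ext (recursive0 1) => -[|s [|]].
have hS : recursive k.+3 (fun ys => if nth 0 ys 1 == 0 then 0 else
    run st (nth 0 ys 2) (nth 0 ys 0 :: (nth 0 ys 1).-1 :: drop 3 ys)).
  apply: recursive_if0 (recursive_proj _) (recursive0 _) _ => //.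
  apply: (@recursive_reshape 3 k [:: _; _; _] _ _ (hst k.+2)).
  by do !split=> //; [apply: recursive_proj|apply: recursive_proj|apply/recursiveP/recursive_proj].
have := recursive_rec (hb k) hS.
have hHs : all_recursive (2 + k) [:: fun xs => nth 0 xs 1; fun xs => nth 0 xs 0].
  by do !split=> //; apply: recursive_proj.
move/(recursive_reshape hHs); apply: recursive_ext => -[|s [|n xs]] //= _.
by rewrite drop0; elim: n => //= n ->; rewrite drop0.
Qed.

Lemma run_recursive_min f : run_recursive f -> run_recursive (PMin f).
Proof.
move=> hf k.
have hH : all_recursive (3 + k) [:: fun ys => nth 0 ys 2; fun ys => nth 0 ys 0].
  by do !split=> //; apply: recursive_proj.
have hF := recursive_reshape hH (hf k.+1).
have hP0 := @recursive_proj k.+3 0 isT; have hP1 := @recursive_proj k.+3 1 isT.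
have := recursive_rec (recursive0 k.+1) (recursive_if0 hP1
  (recursive_if0 hF (recursive_cst _ 1)
     (recursive_if0 (recursiveP hF) (recursiveS (recursiveS hP0)) (recursive0 _))) hP1).
have hSS : all_recursive (1 + k) [:: fun ys => nth 0 ys 0; fun ys => nth 0 ys 0].
  by do !split=> //; apply: recursive_proj.
move/(recursive_reshape hSS)/recursiveP; apply: recursive_ext => -[|s xs] //= _.
rewrite drop0; congr predn; move: {1 4}s => t; elim: t => //= t ->.
by rewrite drop0; case: (run f s (t :: xs)) => [|[|]].
Qed.

Lemma recursive_run p : run_recursive p.
Proof.
elim/prf_nested_ind: p.
- by move=> k; apply: recursive_cst.
- exact: run_recursive_succ.
- exact: run_recursive_proj.
- exact: run_recursive_comp.
- exact: run_recursive_rec.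
- exact: run_recursive_min.
Qed.

(** * Coding of finite sequences *)

Definition code_cons (x c : nat) : nat := 2 ^ x * c.*2.+1.

Definition code_head (u : nat) : nat := find (fun k => odd (iter k half u)) (iota 0 u).

Definition code_behead (u : nat) : nat := (iter (code_head u) half u)./2.

Definition code_drop (i u : nat) : nat := iter i code_behead u.

(* [code_take_rec u j t] codes the [t] entries before position [j] of the
   sequence coded by [u]; the recursion on [t] keeps [u] and [j] fixed. *)
Fixpoint code_take_rec (u j t : nat) : nat :=
  if t is t'.+1 then code_cons (code_head (code_drop (j - t) u)) (code_take_rec u j t')
  else 0.

Definition code_take (u j : nat) : nat := code_take_rec u j j.

Lemma code_seq_cons x s : CodeSeq.code (x :: s) = code_cons x (CodeSeq.code s).
Proof. by []. Qed.

Lemma iter_half_mul_exp2 x m k : k <= x -> iter k half (2 ^ x * m) = 2 ^ (x - k) * m.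
Proof.
elim: k => [|k IH] kx /=; first by rewrite subn0.
by rewrite IH ?(ltnW kx) // -(subnSK kx) expnS -mulnA mul2n doubleK.
Qed.

Lemma code_head_cons x c : code_head (code_cons x c) = x.
Proof.
apply: find_iota_eq => [|/=|i ix /=].
- by apply: leq_trans (ltn_expl x (ltnSn 1)) _; rewrite leq_pmulr.
- by rewrite iter_half_mul_exp2 // subnn mul1n /= odd_double.
- by rewrite iter_half_mul_exp2 ?(ltnW ix) // oddM oddX subn_eq0 leqNgt ix.
Qed.

Lemma code_behead_cons x c : code_behead (code_cons x c) = c.
Proof.
rewrite /code_behead code_head_cons iter_half_mul_exp2 // subnn mul1n.
by rewrite -[c.*2.+1]/(true + c.*2) half_bit_double.
Qed.

Lemma code_cons_gt0 x c : 0 < code_cons x c.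
Proof. by rewrite muln_gt0 expn_gt0. Qed.

Lemma code_eq0 s : (CodeSeq.code s == 0) = (s == [::]).
Proof. by case: s => // x s; rewrite code_seq_cons eqn0Ngt code_cons_gt0. Qed.

Lemma code_behead_code s : code_behead (CodeSeq.code s) = CodeSeq.code (behead s).
Proof. by case: s => // x s; rewrite code_seq_cons code_behead_cons. Qed.

Lemma code_drop_code i s : code_drop i (CodeSeq.code s) = CodeSeq.code (drop i s).
Proof.
elim: i s => [|i IH] s; first by rewrite drop0.
by rewrite /code_drop iterSr code_behead_code -/(code_drop _ _) IH; case: s.
Qed.

Lemma code_head_drop s i : i < size s -> code_head (code_drop i (CodeSeq.code s)) = nth 0 s i.
Proof. by move=> si; rewrite code_drop_code (drop_nth 0 si) code_head_cons. Qed.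

Lemma code_take_rec_code s j t : t <= j -> j <= size s ->
  code_take_rec (CodeSeq.code s) j t = CodeSeq.code (take t (drop (j - t) s)).
Proof.
move=> + js; elim: t => [|t IH] tj /=; first by rewrite take0.
have jts : j - t.+1 < size s by apply: leq_trans js; rewrite ltn_subrL (leq_trans _ tj).
by rewrite IH ?(ltnW tj) // code_head_drop // (drop_nth 0 jts) /= subnSK.
Qed.

Lemma code_take_code s j : j <= size s -> code_take (CodeSeq.code s) j = CodeSeq.code (take j s).
Proof. by move=> js; rewrite /code_take code_take_rec_code // subnn drop0. Qed.

Lemma initE f m : init f m = CodeSeq.code (mkseq f m).
Proof.
rewrite /init; change (pickle _) with (CodeSeq.code (map pickle (mkseq f m))).
by elim: (mkseq f m) => //= x s ->.
Qed.

Lemma recursive_code_head k A : recursive k A -> recursive k (fun xs => code_head (A xs)).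
Proof.
move=> hA; have hP0 := @recursive_proj 2 0 isT; have hP1 := @recursive_proj 2 1 isT.
have hF : recursive 2
    (fun xs => find (fun i => odd (iter i half (nth 0 xs 1))) (iota 0 (nth 0 xs 0))).
  have := recursive_find (recursive_odd
    (recursive_iter (recursive_half (@recursive_proj 1 0 isT)) hP0 hP1)).
  apply: recursive_ext => -[|t [|u [|]]] //= _.
  by apply: eq_find => i /=; case: odd.
exact: (recursive_comp2 (op := fun t u => find (fun i => odd (iter i half u)) (iota 0 t))).
Qed.

Lemma recursive_code_behead k A : recursive k A -> recursive k (fun xs => code_behead (A xs)).
Proof.
move=> hA; apply: recursive_half.
exact: recursive_iter (recursive_half (@recursive_proj 1 0 isT)) (recursive_code_head hA) hA.
Qed.

Lemma recursive_code_drop k I A : recursive k I -> recursive k A ->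
  recursive k (fun xs => code_drop (I xs) (A xs)).
Proof. exact: recursive_iter (recursive_code_behead (@recursive_proj 1 0 isT)). Qed.

Lemma recursive_code_cons k X C : recursive k X -> recursive k C ->
  recursive k (fun xs => code_cons (X xs) (C xs)).
Proof.
move=> hX hC; have := recursiveM (recursive_exp2 hX) (recursiveS (recursiveD hC hC)).
by apply: recursive_ext => xs _; rewrite /code_cons addnn.
Qed.

Lemma recursive_code_take k U J : recursive k U -> recursive k J ->
  recursive k (fun xs => code_take (U xs) (J xs)).
Proof.
move=> hU hJ; have hS : recursive 4 (fun ys => code_cons
    (code_head (code_drop (nth 0 ys 3 - (nth 0 ys 0).+1) (nth 0 ys 2))) (nth 0 ys 1)).
  apply: recursive_code_cons (recursive_proj _) => //.
  apply/recursive_code_head/recursive_code_drop; last exact: recursive_proj.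
  by apply: recursiveB (recursive_proj _) (recursiveS (recursive_proj _)).
have hR : recursive 3 (fun xs => code_take_rec (nth 0 xs 1) (nth 0 xs 2) (nth 0 xs 0)).
  apply: recursive_ext (recursive_rec (recursive0 2) hS) => -[|t [|u [|j [|]]]] //= _.
  by elim: t => //= t ->.
exact: (recursive_comp3 (op := fun t u j => code_take_rec u j t)).
Qed.

(** * Enumeration of c.e. sets *)

(* [t] proposes the candidate [code_head t] and also serves as the budget:
   since [code_cons k s >= s], every [k] in the domain is eventually listed. *)
Definition ce_enum (p : prf) (x0 t : nat) : nat :=
  if run p t [:: code_head t] == 0 then x0 else code_head t.

Lemma ce_enum_range (A : nat -> Prop) p x0 :
  (forall x, A x <-> exists y, eval p [:: x] y) -> A x0 ->
  forall k, (exists t, ce_enum p x0 t = k) <-> A k.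
Proof.
move=> hA Ax0 k; split=> [[t <-]|].
  by rewrite /ce_enum; case E: run => [|w] //=; apply/hA; exists w; apply: run_sound E.
move=> /hA[y /run_complete[s hs]]; exists (code_cons k s).
rewrite /ce_enum code_head_cons (run_mono _ hs) //.
by apply: leq_trans (leq_pmull _ (expn_gt0 2 k)); apply/leqW; rewrite -addnn leq_addr.
Qed.

Lemma recursive_ce_enum p x0 k T : recursive k T ->
  recursive k (fun xs => ce_enum p x0 (T xs)).
Proof.
move=> hT; have hHT := recursive_code_head hT.
have := recursive_comp (Fs := [:: T; fun xs => code_head (T xs)]) (recursive_run p 1).
by move/(_ k (conj hT (conj hHT I)))/recursive_if0/(_ (recursive_cst _ x0) hHT).
Qed.

(** * The switching operator *)

Section SwitchOperator.
Variables (r : nat -> nat -> nat) (p : prf) (x0 : nat).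

Fixpoint counter (pre : nat -> nat) (n : nat) : nat :=
  if n is n'.+1 then
    let c := counter pre n' in if \sum_(i < n) r c (pre i) == 0 then c else c.+1
  else 0.

Definition switch_operator (f : nat -> nat) (n : nat) : nat :=
  ce_enum p x0 (counter (init f) n).

(* [code_drop n u = 0] iff the prefix coded by [u] has length at most [n], and
   then the oracle does not answer yet. *)
Definition switch_oracle (u n : nat) : nat :=
  if code_drop n u == 0 then 0 else (ce_enum p x0 (counter (code_take u) n)).+1.

Lemma eq_counter pre pre' n :
  (forall i, i < n -> pre i = pre' i) -> counter pre n = counter pre' n.
Proof.
elim: n => //= n IH e; rewrite IH => [|i /ltnW/e //].
by under eq_bigr => i _ do rewrite e //.
Qed.

Lemma recursive_counter : computable2 r ->
  recursive 2 (fun xs => counter (code_take (nth 0 xs 1)) (nth 0 xs 0)).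
Proof.
move=> /computable2_recursive hr.
have hW : recursive 3
    (fun xs => \sum_(i < nth 0 xs 0) r (nth 0 xs 1) (code_take (nth 0 xs 2) i)).
  have hH : recursive 3 (fun ys => r (nth 0 ys 1) (code_take (nth 0 ys 2) (nth 0 ys 0))).
    apply: (recursive_comp2 (op := r)) hr (recursive_proj _) _ => //.
    by apply: recursive_code_take; apply: recursive_proj.
  by apply: recursive_ext (recursive_sum hH) => -[|n [|c [|u [|]]]].
have hP0 := @recursive_proj 3 0 isT; have hP1 := @recursive_proj 3 1 isT.
have hS := recursive_if0 (recursive_comp3 (op := fun n c u => \sum_(i < n) r c (code_take u i))
  hW (recursiveS hP0) hP1 (@recursive_proj 3 2 isT)) hP1 (recursiveS hP1).
apply: recursive_ext (recursive_rec (recursive0 1) hS) => -[|n [|u [|]]] //= _.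
by elim: n => //= n ->.
Qed.

Lemma switch_oracle_computable : computable2 r -> computable2 switch_oracle.
Proof.
move=> hr; apply/computable2_recursive.
apply: recursive_if0 (recursive0 _) (recursiveS (recursive_ce_enum _ _ _)).
  by apply: recursive_code_drop; apply: recursive_proj.
exact: (recursive_comp2 (op := fun n u => counter (code_take u) n)
  (recursive_counter hr) (recursive_proj _) (recursive_proj _)).
Qed.

Lemma switch_operator_computable : computable2 r -> computable_operator switch_operator.
Proof.
move=> hr; exists switch_oracle; split; first exact: switch_oracle_computable.
move=> f n; have hdrop m : (code_drop n (init f m) == 0) = (m <= n).
  by rewrite initE code_drop_code code_eq0 -size_eq0 size_drop size_mkseq subn_eq0.
have htake m : n < m -> counter (code_take (init f m)) n = counter (init f) n.
  move=> nm; apply: eq_counter => i ni; have im : i <= m := ltnW (ltn_trans ni nm).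
  by rewrite !initE code_take_code ?size_mkseq // /mkseq -map_take take_iota (minn_idPl im).
split=> [m|]; last by exists n.+1; rewrite /switch_oracle hdrop ltnn htake.
by rewrite /switch_oracle hdrop; case: leqP => [|/htake->]; [left|right].
Qed.

Lemma counter_step pre n :
  counter pre n.+1 = counter pre n \/ counter pre n.+1 = (counter pre n).+1.
Proof. by rewrite /=; case: eqP; [left|right]. Qed.

Lemma counter_mono pre : {homo counter pre : m n / m <= n}.
Proof.
apply: (homo_leq leqnn leq_trans) => n.
by case: (counter_step pre n) => ->.
Qed.

Lemma counter_onto_prefix pre k N : k <= counter pre N -> exists n, counter pre n = k.
Proof.
elim: N => [|N IH]; first by rewrite leqn0 => /eqP ->; exists 0.
case: (leqP k (counter pre N)) => [/IH //|kN kN1]; exists N.+1; apply/eqP.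
rewrite eqn_leq kN1 andbT.
by case: (counter_step pre N) => ->; [apply: ltnW|].
Qed.

Lemma counter_surj pre : (forall n, exists m, r n (pre m) <> 0) ->
  forall k, exists n, counter pre n = k.
Proof.
move=> hpre; elim=> [|k [n hn]]; first by exists 0.
have [m hm] := hpre k; pose N := maxn n m.
have kN : k <= counter pre N by rewrite -hn counter_mono // leq_maxl.
apply: (@counter_onto_prefix _ _ N.+1); case: (ltnP k (counter pre N)) => [|NK].
  by move/leq_trans; apply; apply: counter_mono.
have eN : counter pre N = k by apply/eqP; rewrite eqn_leq NK kN.
rewrite /= eN; case: eqP => // /eqP; rewrite sum_nat_eq0 => /forallP.
by move=> /(_ (Ordinal (leq_maxr n m : m < N.+1))) /eqP.
Qed.

Lemma counter_bound pre j : (forall m, r j (pre m) = 0) -> forall n, counter pre n <= j.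
Proof.
move=> hj; elim=> // n IH; case: (leqP j (counter pre n)) => [jn|]; last first.
  by case: (counter_step pre n) => ->; [apply: ltnW|].
have e : counter pre n = j by apply/eqP; rewrite eqn_leq IH jn.
have sum0 : \sum_(i < n.+1) r j (pre i) = 0 by apply: big1 => i _; apply: hj.
by rewrite /= e sum0.
Qed.

End SwitchOperator.

Theorem ce_pi02_switch_operator (A : nat -> Prop) x0 (P : (nat -> nat) -> Prop) :
  ce A -> A x0 -> Pi02 P ->
  exists F, computable_operator F /\ forall f,
    (P f -> forall k, (exists i, F f i = k) <-> A k) /\
    (~ P f -> exists b, forall n, F f n <= b).
Proof.
move=> [p hp] Ax0 [r [hr hPr]]; exists (switch_operator r p x0).
split=> [|f]; first exact: switch_operator_computable.
split=> [/hPr hP k|nP].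
  rewrite -(ce_enum_range hp Ax0); split=> [[n <-]|[t <-]]; first by eexists.
  by have [n <-] := counter_surj hP t; exists n.
have [j hj] : exists j, forall m, r j (init f m) = 0.
  apply: contrapT => hj; apply/nP/hPr => n; apply: contrapT => hn.
  by apply: hj; exists n => m; apply: contrapT => hm; apply: hn; exists m.
exists (\max_(i < j.+1) ce_enum p x0 i) => n.
exact: (leq_bigmax (Ordinal (counter_bound hj n : _ < j.+1))).
Qed.

Local Open Scope ring_scope.

(** * Diagrams are infinite *)

(* The code of the pair (zero vector, interval (-1, i+1)); the formal
   expression coded by [0] is the empty sum. *)
Definition zero_interval_code (i : nat) : nat :=
  pickle (0%N, pickle (-1 : rat, i.+1%:R : rat)).

Lemma zero_interval_code_inj : injective zero_interval_code.
Proof.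
move=> i j /(pcan_inj pickleK) /(congr1 snd) /(pcan_inj pickleK) /(congr1 snd) /eqP.
by rewrite eqr_nat => /eqP[].
Qed.

Lemma diagram_zero_interval_code (R : realType) (c : bool)
    (B : completeNormedModType (Scal R c)) (e : nat -> B) i :
  diagram e (zero_interval_code i).
Proof.
exists 0%N, (pickle (-1 : rat, i.+1%:R : rat)); split=> //.
rewrite /in_rat_interval /rat_interval pickleK /rat_vector /formal_expr /=.
by rewrite big_nil normr0 rmorphN1 ltrN10 ltr0q ltr0Sn.
Qed.

Lemma injective_unbounded (g : nat -> nat) : injective g -> forall b, exists i, (b < g i)%N.
Proof.
move=> g_inj b; apply: contrapT => /forallNP gb.
have : (size [seq g i | i <- iota 0 b.+2] <= size (iota 0 b.+1))%N.
  apply: uniq_leq_size; first by rewrite map_inj_uniq // iota_uniq.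
  by move=> _ /mapP[i _ ->]; rewrite mem_iota /= ltnS leqNgt; apply/negP/gb.
by rewrite size_map !size_iota ltnn.
Qed.

Lemma names_unbounded (R : realType) (c : bool)
    (B : completeNormedModType (Scal R c)) (e : nat -> B) f :
  names e f -> forall b, exists n, (b < f n)%N.
Proof.
move=> hf b; have [i hi] := injective_unbounded zero_interval_code_inj b.
by have [n fn] := (hf _).2 (diagram_zero_interval_code e i); exists n; rewrite fn.
Qed.

Theorem lemma2p5 (R : realType) (c : bool)
  (B : completeNormedModType (Scal R c)) (e : nat -> B)
  (he : lin_dense e) (hcomp : computable_presentation e)
  (P : (nat -> nat) -> Prop) (hP : Pi02 P) :
  exists F : (nat -> nat) -> (nat -> nat),
    computable_operator F /\
    forall f : nat -> nat,
      (P f -> names e (F f)) /\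
      (~ P f -> ~ names_some_presentation R c (F f)).
Proof.
have [F [hF hFP]] := ce_pi02_switch_operator hcomp (diagram_zero_interval_code e 0) hP.
exists F; split=> // f; have [hPf hnPf] := hFP f.
split=> [/hPf // | nPf [B' [e' [_ hname]]]].
have [b hb] := hnPf nPf; have [n] := names_unbounded hname b.
by rewrite ltnNge hb.
Qed.
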